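(* A function $f:\mathbb{N}^d\to\mathbb{N}$ is stably computable by an output-oblivious CRN if and only if it is stably computable by an output-monotonic CRN.
   Context: A chemical reaction network (CRN) is a pair $(\mathcal{S},\mathcal{R})$ of a finite set of species and a finite set of reactions $(\vec{R},\vec{P})\in\mathbb{N}^{\mathcal{S}}\times\mathbb{N}^{\mathcal{S}}$. A configuration is $\vec{C}\in\mathbb{N}^{\mathcal{S}}$; a reaction is applicable if $\vec{R}\le\vec{C}$ and yields $\vec{C}-\vec{R}+\vec{P}$; reachability is via finite sequences of applicable reactions. To compute $f:\mathbb{N}^d\to\mathbb{N}$ a CRN has input species $X_1,\ldots,X_d$, output species $Y$, leader species $L$; the initial configuration $\vec{I}_{\vec{x}}$ has $\vec{x}(i)$ copies of $X_i$, one $L$, nothing else. $\vec{C}$ is stable if all configurations reachable from it have the same count of $Y$. The CRN stably computes $f$ if for every $\vec{x}$ and every $\vec{C}$ reachable from $\vec{I}_{\vec{x}}$ some stable $\vec{O}$ reachable from $\vec{C}$ has $\vec{O}(Y)=f(\vec{x})$. A CRN is output-oblivious if $\vec{R}(Y)=0$ for every reaction $(\vec{R},\vec{P})$; it is output-monotonic if no reaction decreases the count of $Y$, i.e. $\vec{P}(Y)\ge\vec{R}(Y)$ for every reaction. *)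

From Stdlib Require List.
From mathcomp Require Import all_boot.
From Stdlib Require Import Relation_Operators.
Unset Printing Implicit Defensive.

(* Species are 'I_nsp (a finite set),
   a configuration is a map 'I_nsp -> nat, a reaction is a pair (R, P) of
   configurations, and the finite set of reactions is a list. *)
Record CRN (d : nat) := mkCRN {
  nsp : nat;
  reactions : seq (('I_nsp -> nat) * ('I_nsp -> nat));
  inX : 'I_d -> 'I_nsp;
  outY : 'I_nsp;
  leadL : 'I_nsp;
  inX_inj : injective inX;
  L_notX : forall i, inX i <> leadL;
  Y_notX : forall i, inX i <> outY;
  Y_notL : outY <> leadL
}.
Arguments nsp {d}. Arguments reactions {d}. Arguments inX {d}. Arguments outY {d}. Arguments leadL {d}.

Definition config {d} (C : CRN d) := 'I_(nsp C) -> nat.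

Definition applicable {d} (C : CRN d) (r : config C * config C) (c : config C) :=
  forall s, r.1 s <= c s.

Definition step {d} (C : CRN d) (c c' : config C) : Prop :=
  exists2 r, List.In r (reactions C) &
    applicable C r c /\ forall s, c' s = c s - r.1 s + r.2 s.

Definition reachable {d} (C : CRN d) : config C -> config C -> Prop :=
  clos_refl_trans (config C) (step C).

Definition init_config {d} (C : CRN d) (x : 'I_d -> nat) : config C :=
  fun s => if s == leadL C then 1
           else if [pick i | inX C i == s] is Some i then x i else 0.

Definition stable {d} (C : CRN d) (c : config C) : Prop :=
  forall c', reachable C c c' -> c' (outY C) = c (outY C).

Definition stably_computes {d} (C : CRN d) (f : ('I_d -> nat) -> nat) : Prop :=
  forall x c, reachable C (init_config C x) c ->
    exists o, reachable C c o /\ stable C o /\ o (outY C) = f x.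

Definition output_oblivious {d} (C : CRN d) : Prop :=
  forall r, List.In r (reactions C) -> r.1 (outY C) = 0.

Definition output_monotonic {d} (C : CRN d) : Prop :=
  forall r, List.In r (reactions C) -> r.1 (outY C) <= r.2 (outY C).

From mathcomp Require Import all_boot.
From Stdlib Require Import Relation_Definitions Relation_Operators.
From Stdlib Require Import FunctionalExtensionality.

(* Conversely, given an
   output-monotonic CRN, add a fresh species Y' that becomes the output, demote
   the old output Y to an ordinary species, and let every reaction produce
   P(Y) - R(Y) copies of Y' while never consuming it.  Since no reaction
   decreases Y, this difference is the exact net change of Y, so the count of
   Y' always equals that of Y along executions from the initial configuration,
   and the new CRN is a simulation of the old one with an oblivious output. *)

Set Implicit Arguments.
Unset Strict Implicit.

Section ReflTransClosure.

Variables (A B : Type) (R : relation A) (S : relation B).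

Lemma clos_rt_map (g : A -> B) :
  (forall a b, R a b -> S (g a) (g b)) ->
  forall a b, clos_refl_trans A R a b -> clos_refl_trans B S (g a) (g b).
Proof.
move=> gRS a b; elim=> [x y /gRS|x|x y z _ IHxy _ IHyz].
- exact: rt_step.
- exact: rt_refl.
- exact: rt_trans IHyz.
Qed.

Lemma clos_rt_invariant (P : A -> Prop) :
  (forall a b, R a b -> P a -> P b) ->
  forall a b, clos_refl_trans A R a b -> P a -> P b.
Proof. by move=> RP a b; elim; eauto. Qed.

End ReflTransClosure.

Lemma output_oblivious_monotonic d (C : CRN d) :
  output_oblivious C -> output_monotonic C.
Proof. by move=> obl r /obl ->. Qed.

Section ObliviousCRN.

Variables (d : nat) (C : CRN d).

Local Notation n := (nsp C).
Local Notation Y := (outY C).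
(* The species of the new CRN are [old t] for the species [t] of [C], and the
   fresh output species [ord_max]. *)
Local Notation old := (@lift n.+1 ord_max).

Definition extend (c : config C) (k : nat) : 'I_n.+1 -> nat :=
  fun s => if unlift ord_max s is Some t then c t else k.

Definition restrict (c : 'I_n.+1 -> nat) : config C := fun t => c (old t).

Definition mirror (c : config C) := extend c (c Y).

Definition mirrors_output (c : 'I_n.+1 -> nat) := c ord_max = c (old Y).

Definition oblivious_reaction (r : config C * config C) :=
  (extend r.1 0, extend r.2 (r.2 Y - r.1 Y)).

Lemma extend_old c k t : extend c k (old t) = c t.
Proof. by rewrite /extend liftK. Qed.

Lemma extend_max c k : extend c k ord_max = k.
Proof. by rewrite /extend unlift_none. Qed.

Lemma old_neq_max t : old t <> ord_max.
Proof. by move/eqP; rewrite eq_sym (negbTE (neq_lift _ _)). Qed.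

Definition oblivious_crn : CRN d.
Proof.
refine (@mkCRN d n.+1 (map oblivious_reaction (reactions C))
          (fun i => old (inX C i)) ord_max (old (leadL C)) _ _ _ _).
- by move=> i j /lift_inj /(@inX_inj _ C).
- by move=> i /lift_inj; apply: L_notX.
- by move=> i; apply: old_neq_max.
- by move=> /esym; apply: old_neq_max.
Defined.

Local Notation C' := oblivious_crn.

Lemma oblivious_crn_output_oblivious : output_oblivious C'.
Proof. by move=> _ /List.in_map_iff [r [<- _]]; rewrite /= extend_max. Qed.

Lemma oblivious_crn_init_config x :
  init_config C' x = mirror (init_config C x).
Proof.
apply: functional_extensionality => s; rewrite /mirror /extend /init_config /=.
case: unliftP => [t ->|->].
  rewrite (inj_eq lift_inj); case: eqP => // _.
  by rewrite (eq_pick (fun i => inj_eq (@lift_inj n.+1 ord_max) (inX C i) t)).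
have /negbTE -> : ord_max != old (leadL C) by apply: neq_lift.
have /negbTE -> : Y != leadL C by apply/eqP; apply: Y_notL.
case: pickP => [i /eqP /old_neq_max //|_].
by case: pickP => [i /eqP /Y_notX|].
Qed.

Lemma restrict_step c1 c2 : step C' c1 c2 -> step C (restrict c1) (restrict c2).
Proof.
case=> _ /List.in_map_iff [r [<- r_in]] [app_r c2E].
exists r => //; split=> [t|t]; first by have := app_r (old t); rewrite /= extend_old.
by rewrite /restrict c2E /= !extend_old.
Qed.

Lemma restrict_reachable c1 c2 :
  reachable C' c1 c2 -> reachable C (restrict c1) (restrict c2).
Proof. exact: (clos_rt_map restrict_step). Qed.

Lemma mirrorK c : restrict (mirror c) = c.
Proof.
by apply: functional_extensionality => t; rewrite /restrict /mirror extend_old.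
Qed.

Lemma restrictK c : mirrors_output c -> mirror (restrict c) = c.
Proof.
move=> mir; apply: functional_extensionality => s; rewrite /mirror /extend.
by case: unliftP => [t ->|->].
Qed.

Lemma mirror_mirrors_output c : mirrors_output (mirror c).
Proof. by rewrite /mirrors_output /mirror extend_max extend_old. Qed.

Hypothesis monoC : output_monotonic C.

Lemma net_output_change r c :
  List.In r (reactions C) -> applicable C r c ->
  c Y - r.1 Y + r.2 Y = c Y + (r.2 Y - r.1 Y).
Proof. by move=> /monoC RP /(_ Y) Rc; rewrite addnBA // addnBAC. Qed.

Lemma step_mirrors_output c1 c2 :
  step C' c1 c2 -> mirrors_output c1 -> mirrors_output c2.
Proof.
case=> _ /List.in_map_iff [r [<- r_in]] [app_r c2E] mir.
have app_rC : applicable C r (restrict c1).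
  by move=> t; have := app_r (old t); rewrite /= extend_old.
rewrite /mirrors_output !c2E /= !extend_max !extend_old mir subn0.
exact: esym (net_output_change r_in app_rC).
Qed.

Lemma reachable_mirrors_output c1 c2 :
  reachable C' c1 c2 -> mirrors_output c1 -> mirrors_output c2.
Proof. exact: (clos_rt_invariant step_mirrors_output). Qed.

Lemma mirror_step c1 c2 : step C c1 c2 -> step C' (mirror c1) (mirror c2).
Proof.
case=> r r_in [app_r c2E]; exists (oblivious_reaction r).
  exact: List.in_map.
split=> s; case: (unliftP ord_max s) => [t ->|->] /=;
  rewrite /mirror ?extend_old ?extend_max ?subn0 //.
by rewrite c2E (net_output_change r_in app_r).
Qed.

Lemma mirror_reachable c1 c2 :
  reachable C c1 c2 -> reachable C' (mirror c1) (mirror c2).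
Proof. exact: (clos_rt_map mirror_step). Qed.

Lemma mirror_stable o : stable C o -> stable C' (mirror o).
Proof.
move=> stab_o c reach_c.
have mir_c := reachable_mirrors_output reach_c (mirror_mirrors_output o).
have := restrict_reachable reach_c; rewrite mirrorK => /stab_o.
by rewrite /= mir_c /mirror extend_max.
Qed.

Lemma oblivious_crn_stably_computes f :
  stably_computes C f -> stably_computes C' f.
Proof.
move=> compC x c; rewrite oblivious_crn_init_config => reach_c.
have mir_c := reachable_mirrors_output reach_c (mirror_mirrors_output _).
have := restrict_reachable reach_c; rewrite mirrorK.
move=> /compC [o [reach_o [stab_o o_val]]].
exists (mirror o); split; last split.
- by rewrite -(restrictK mir_c); apply: mirror_reachable.
- exact: mirror_stable.
- by rewrite /= /mirror extend_max.
Qed.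

End ObliviousCRN.

Theorem mainTheorem11 (d : nat) (f : ('I_d -> nat) -> nat) :
  (exists C : CRN d, output_oblivious C /\ stably_computes C f) <->
  (exists C : CRN d, output_monotonic C /\ stably_computes C f).
Proof.
split=> [[C [oblC compC]]|[C [monoC compC]]].
  by exists C; split=> //; apply: output_oblivious_monotonic.
exists (oblivious_crn C); split.
  exact: oblivious_crn_output_oblivious.
exact: oblivious_crn_stably_computes.
Qed.
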